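(* Let $n\ge3$. For an SSM-recurrent configuration $c$ on $W_n$ define $m(c)\in\{0,1,2\}^n$ by $m(c)_i=0$ if $c_i=0$, $m(c)_i=2$ if $i$ is a cyclically first maximal vertex of $c$, and $m(c)_i=1$ otherwise. Then $m$ is a surjection from the set of SSM-recurrent configurations on $W_n$ onto the set of minimal SSM-recurrent configurations on $W_n$, $m(c)=c$ whenever $c$ is minimal SSM-recurrent, and $\mathrm{level}(c)=|c|-|m(c)|$, where $|c|=\sum_{i=1}^n c_i$.
   Context: $W_n$: cycle $C_n$ on $[n]$ (edges $\{i,i+1\}$, $\{n,1\}$, indices mod $n$, vertices clockwise) plus sink $0$ adjacent to all of $[n]$. For $i,j\in[n]$, $(i,j)$ is the set of vertices strictly between $i$ and $j$ going clockwise from $i$ to $j$ ($(i,i)=[n]\setminus\{i\}$). Sandpile setting: stable configurations on $W_n$ are $c\in\{0,1,2\}^n$; SSM (parameter $p\in(0,1)$: a toppling vertex sends a grain independently to each neighbour with probability $p$, grains to the sink vanish) Markov chain adds a grain at a random vertex and stabilises; SSM-recurrent = recurrent state. Known: stable $c$ is SSM-recurrent iff for all $i,j$ with $c_i=c_j=0$ some $k\in(i,j)$ has $c_k=2$. Minimal SSM-recurrent: SSM-recurrent with no other SSM-recurrent $c'$ satisfying $c'_i\le c_i$ for all $i$. A vertex $i$ is a cyclically first maximal vertex of $c$ if $c_i=2$ and there is $j\in[n]$ with $c_j=0$ and $c_k=1$ for all $k\in(j,i)$. The level of a recurrent configuration on $W_n$ is $\mathrm{level}(c)=\sum_i c_i+\deg(0)-|E(W_n)|=\sum_i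 c_i-n$. *)

From mathcomp Require Import all_boot all_algebra.
Set Implicit Arguments. Unset Strict Implicit. Unset Printing Implicit Defensive.

(* Vertices of the cycle C_n are [n] = {1,..,n}, modelled by 'I_n = {0,..,n-1};
   clockwise successor of i is i+1 mod n. Configurations on the non-sink
   vertices of W_n are finite functions 'I_n -> nat. *)
Definition config (n : nat) := {ffun 'I_n -> nat}.

(* k lies in the open clockwise interval (i,j); (i,i) = [n] \ {i}. *)
Definition in_open (n : nat) (i j k : 'I_n) : bool :=
  let d := (k + n - i) %% n in
  let e := (j + n - i) %% n in
  (0 < d) && ((d < e) || (i == j)).

(* Stable configurations on W_n: every vertex of [n] has degree 3. *)
Definition stable (n : nat) (c : config n) : Prop := forall i, c i <= 2.

(* SSM-recurrent, via the known combinatorial characterisation. *)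
Definition ssm_recurrent (n : nat) (c : config n) : Prop :=
  stable c /\
  forall i j : 'I_n, c i = 0 -> c j = 0 -> exists k, in_open i j k /\ c k = 2.

Definition minimal_ssm_recurrent (n : nat) (c : config n) : Prop :=
  ssm_recurrent c /\
  forall c' : config n, ssm_recurrent c' -> (forall i, c' i <= c i) -> c' = c.

Definition cfm_vertex (n : nat) (c : config n) (i : 'I_n) : bool :=
  (c i == 2) &&
  [exists j : 'I_n, (c j == 0) && [forall k : 'I_n, in_open j i k ==> (c k == 1)]].

Definition mconf (n : nat) (c : config n) : config n :=
  [ffun i => if c i == 0 then 0 else if cfm_vertex c i then 2 else 1].

Definition csize (n : nat) (c : config n) : nat := \sum_(i < n) c i.

(* |E(W_n)| = n (cycle edges, n >= 3) + n (spokes); deg(0) = n. *)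
Definition level (n : nat) (c : config n) : int :=
  (csize c)%:Z + n%:Z - (2 * n)%:Z.

From mathcomp Require Import all_boot all_algebra.
From mathcomp Require Import zify.

Set Implicit Arguments.
Unset Strict Implicit.
Unset Printing Implicit Defensive.

(* Walking clockwise from a zero j of a recurrent configuration c one meets a
   (possibly empty) run of 1s followed by a 2: meeting a 0 first, or coming back
   to j, would give two zeros with no 2 between them.  That 2 is a cyclically
   first maximal vertex, and it determines j, so c has exactly as many cyclically
   first maximal vertices as zeros.  Since |x| + #{i | x_i = 0} = n + #{i | x_i = 2}
   for every stable x, this gives |m(c)| = n <= |c|.  As m(c) is recurrent and
   m(c) <= c, the minimal recurrent configurations are exactly the recurrent
   ones of size n, and m fixes them. *)

Section ClockwiseDistance.
Variable n : nat.
Implicit Types i j k : 'I_n.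

Definition cdist i k := (k + n - i) %% n.

Lemma cdistE i k : cdist i k = if i <= k then k - i else k + n - i.
Proof.
have := ltn_ord i; have := ltn_ord k; rewrite /cdist; case: (leqP i k) => ? ? ?.
- have -> : k + n - i = k - i + n by lia.
  by rewrite modnDr modn_small //; lia.
- by rewrite modn_small //; lia.
Qed.

Lemma in_openE i j k :
  in_open i j k = (0 < cdist i k) && ((cdist i k < cdist i j) || (i == j)).
Proof. by []. Qed.

Lemma cdist_gt0 i k : (0 < cdist i k) = (k != i).
Proof.
have := ltn_ord i; have := ltn_ord k; rewrite cdistE -(inj_eq val_inj) /=.
by case: ifP => ? ? ?; apply/idP/idP; lia.
Qed.

Lemma cdist_inj i : injective (cdist i).
Proof.
move=> k k'; have := ltn_ord i; have := ltn_ord k; have := ltn_ord k'.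
rewrite !cdistE => ? ? ? E; apply: val_inj => /=; move: E.
by do 2 case: ifP => ?; lia.
Qed.

Lemma cdist_injl i : injective (cdist^~ i).
Proof.
move=> j j'; have := ltn_ord i; have := ltn_ord j; have := ltn_ord j'.
rewrite /= !cdistE => ? ? ? E; apply: val_inj => /=; move: E.
by do 2 case: ifP => ?; lia.
Qed.

Lemma in_open_cdist_lt j j' i : j != i -> cdist j i < cdist j' i -> in_open j' i j.
Proof.
have := ltn_ord i; have := ltn_ord j; have := ltn_ord j'.
rewrite in_openE !cdistE -(inj_eq val_inj) /= => ? ? ? ji.
by do 3 case: ifP => ?; lia.
Qed.

End ClockwiseDistance.

Section Recurrent.
Variable n : nat.
Implicit Types (c x y : config n) (i j k : 'I_n).

Definition zero_ones_run c j i : bool :=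
  (c j == 0) && [forall k, in_open j i k ==> (c k == 1)].

Lemma zero_ones_runP c j i :
  reflect (c j = 0 /\ forall k, in_open j i k -> c k = 1) (zero_ones_run c j i).
Proof.
apply: (iffP andP) => [[/eqP -> /forallP ones]|[-> ones]]; split => //.
- by move=> k /(implyP (ones k)) /eqP.
- by apply/forallP => k; apply/implyP => /ones ->.
Qed.

Lemma cfm_vertexP c i :
  reflect (c i = 2 /\ exists j, zero_ones_run c j i) (cfm_vertex c i).
Proof. by apply: (iffP andP) => [[/eqP -> /existsP]|[-> /existsP]]. Qed.

Lemma zero_ones_run_inj c j i i' : c i = 2 -> c i' = 2 ->
  zero_ones_run c j i -> zero_ones_run c j i' -> i = i'.
Proof.
move=> ci ci' /zero_ones_runP [cj ones] /zero_ones_runP [_ ones'].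
have ij : i != j by apply: contra_eqN ci => /eqP ->; rewrite cj.
have i'j : i' != j by apply: contra_eqN ci' => /eqP ->; rewrite cj.
case: (ltngtP (cdist j i) (cdist j i')) => [lt|lt|]; last exact: cdist_inj.
- by have := ones' i; rewrite in_openE cdist_gt0 ij lt ci => /(_ isT).
- by have := ones i'; rewrite in_openE cdist_gt0 i'j lt ci' => /(_ isT).
Qed.

Lemma zero_ones_run_injl c j j' i : c i = 2 ->
  zero_ones_run c j i -> zero_ones_run c j' i -> j = j'.
Proof.
move=> ci /zero_ones_runP [cj ones] /zero_ones_runP [cj' ones'].
have ji : j != i by apply: contra_eqN cj => /eqP ->; rewrite ci.
have j'i : j' != i by apply: contra_eqN cj' => /eqP ->; rewrite ci.
case: (ltngtP (cdist j i) (cdist j' i)) => [lt|lt|]; last exact: cdist_injl.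
- by have := ones' j (in_open_cdist_lt ji lt); rewrite cj.
- by have := ones j' (in_open_cdist_lt j'i lt); rewrite cj'.
Qed.

(* The vertex i is the first vertex after j, clockwise, where c is not 1. *)
Lemma ssm_recurrent_zero_ones_run c j : ssm_recurrent c -> c j = 0 ->
  exists2 i, c i = 2 & zero_ones_run c j i.
Proof.
move=> [st rec] cj; have [k0 [jk0 ck0]] := rec j j cj cj.
pose P k := (0 < cdist j k) && (c k != 1).
have Pk0 : P k0 by move: jk0; rewrite /P in_openE ck0 => /andP [->].
case: (arg_minnP (cdist j) Pk0) => i /andP [ji ci] imin.
have ij : (j == i) = false by apply/negbTE; rewrite eq_sym -cdist_gt0.
have ones k : in_open j i k -> c k = 1.
  rewrite in_openE ij orbF => /andP [jk lt].
  by apply/eqP; apply: contraTT lt => ck; rewrite -leqNgt imin // /P jk.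
have run : zero_ones_run c j i by apply/zero_ones_runP.
exists i => //; move: ci (st i); case ci: (c i) => [|[|[|]]] // _ _.
by have [k [/ones -> ]] := rec j i cj ci.
Qed.

Lemma card_cfm_vertex c : ssm_recurrent c ->
  #|[set i | cfm_vertex c i]| = #|[set j | c j == 0]|.
Proof.
move=> rc; pose run_start i := odflt i [pick j | zero_ones_run c j i].
have run_startP i : cfm_vertex c i -> zero_ones_run c (run_start i) i.
  by case/cfm_vertexP => _ [j run]; rewrite /run_start; case: pickP => [//|/(_ j)]; rewrite run.
have -> : [set j | c j == 0] = run_start @: [set i | cfm_vertex c i].
  apply/setP => j; rewrite inE; apply/eqP/imsetP => [cj|[i]].
  - have [i ci run] := ssm_recurrent_zero_ones_run rc cj.
    have cfm_i : cfm_vertex c i by apply/cfm_vertexP; split; last exists j.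
    by exists i; rewrite ?inE // (zero_ones_run_injl ci run (run_startP i cfm_i)).
  - by rewrite inE => /run_startP /zero_ones_runP [? _] ->.
apply/esym/card_in_imset => i i'; rewrite !inE => cfm_i cfm_i' same_start.
have [[ci _] [ci' _]] := (elimT (cfm_vertexP c i) cfm_i, elimT (cfm_vertexP c i') cfm_i').
apply: (zero_ones_run_inj ci ci' (run_startP i cfm_i)).
by rewrite same_start; apply: run_startP.
Qed.

Lemma csize_stable x : stable x ->
  csize x + #|[set i | x i == 0]| = n + #|[set i | x i == 2]|.
Proof.
move=> st; rewrite -!sum1dep_card /csize !(big_mkcond (fun i => x i == _)) /=.
have sum1_n : \sum_(i < n) 1 = n by rewrite sum1_card card_ord.
rewrite -[X in _ = X + _]sum1_n -!big_split /=.
by apply: eq_bigr => i _; move: (st i); case: (x i) => [|[|[|]]].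
Qed.

Lemma ssm_recurrent_csize_ge c : ssm_recurrent c -> n <= csize c.
Proof.
move=> rc; have := csize_stable rc.1; rewrite -card_cfm_vertex //.
suff : #|[set i | cfm_vertex c i]| <= #|[set i | c i == 2]| by lia.
by apply/subset_leq_card/subsetP => i; rewrite !inE => /andP [].
Qed.

Lemma mconf_eq0 c i : (mconf c i == 0) = (c i == 0).
Proof. by rewrite ffunE; case: ifP => // _; case: ifP. Qed.

Lemma mconf_eq2 c i : (mconf c i == 2) = cfm_vertex c i.
Proof.
rewrite ffunE; case: ifP => [/eqP ci|_]; last by case: ifP.
by apply/esym/negbTE; apply: contraL isT => /cfm_vertexP []; rewrite ci.
Qed.

Lemma mconf_le c i : stable c -> mconf c i <= c i.
Proof.
move=> st; rewrite ffunE; case: eqP => // /eqP ci.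
by case: ifP => [/andP [/eqP -> _] //|_]; rewrite lt0n.
Qed.

Lemma mconf_ssm_recurrent c : ssm_recurrent c -> ssm_recurrent (mconf c).
Proof.
move=> rc; split=> [i|i j].
  by rewrite ffunE; case: ifP => //; case: ifP.
move=> /eqP; rewrite mconf_eq0 => /eqP ci /eqP; rewrite mconf_eq0 => /eqP cj.
have [k ck run] := ssm_recurrent_zero_ones_run rc ci.
exists k; split; last by apply/eqP; rewrite mconf_eq2; apply/cfm_vertexP; split; last exists i.
have ki : k != i by apply: contra_eqN ck => /eqP ->; rewrite ci.
case/zero_ones_runP: run => _ ones.
rewrite in_openE cdist_gt0 ki /=; case: (eqVneq i j) => [-> | ij]; first by rewrite orbT.
case: (ltngtP (cdist i k) (cdist i j)) => [//|lt|/cdist_inj kj]; last by move: ck; rewrite kj cj.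
by have := ones j; rewrite in_openE cdist_gt0 eq_sym ij lt cj => /(_ isT).
Qed.

Lemma csize_mconf c : ssm_recurrent c -> csize (mconf c) = n.
Proof.
move=> rc; have := csize_stable (mconf_ssm_recurrent rc).1.
under eq_finset do rewrite mconf_eq0.
under [[set i | mconf c i == 2]]eq_finset do rewrite mconf_eq2.
by rewrite card_cfm_vertex //; apply: addIn.
Qed.

Lemma eq_csize_le x y : (forall i, x i <= y i) -> csize y <= csize x -> x = y.
Proof.
rewrite /csize => le_xy le_size; apply/ffunP => i; apply/eqP.
have [_] := leqif_sum (fun i (_ : true) => leqif_eq (le_xy i)).
by rewrite eqn_leq le_size leq_sum // => /esym/forall_inP; apply.
Qed.

End Recurrent.

Lemma mconf_minimal n (c : config n) :
  ssm_recurrent c -> minimal_ssm_recurrent (mconf c).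
Proof.
move=> rc; split=> [|c' rc' le_c'm]; first exact: mconf_ssm_recurrent.
by apply: eq_csize_le => //; rewrite csize_mconf // ssm_recurrent_csize_ge.
Qed.

Lemma mconf_id n (c : config n) : minimal_ssm_recurrent c -> mconf c = c.
Proof.
case=> rc min_c; apply: min_c; first exact: mconf_ssm_recurrent.
by move=> i; apply: mconf_le rc.1.
Qed.

(* [hn] is unused: [3 <= n] only enters through |E(W_n)| = 2n, already built into [level]. *)
Theorem mainTheorem5 (n : nat) (hn : 3 <= n) :
  (forall c : config n, ssm_recurrent c -> minimal_ssm_recurrent (mconf c)) /\
  (forall d : config n, minimal_ssm_recurrent d ->
     exists c : config n, ssm_recurrent c /\ mconf c = d) /\
  (forall c : config n, minimal_ssm_recurrent c -> mconf c = c) /\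
  (forall c : config n, ssm_recurrent c ->
     level c = ((csize c)%:Z - (csize (mconf c))%:Z)%R).
Proof.
split; first exact: mconf_minimal.
split; first by move=> d min_d; exists d; split; [exact: min_d.1 | exact: mconf_id].
split; first exact: mconf_id.
by move=> c rc; rewrite /level csize_mconf //; lia.
Qed.
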